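(* The set $\{x\in V: 0\in\overline{A\cdot x}\}$ is a real algebraic subset of $V$; in particular it is closed.
   Context: Let $V$ be a finite-dimensional real vector space with a scalar product. Let $G\subset\mathrm{GL}(V)$ be a connected closed subgroup, closed under transpose, with Lie algebra $\mathfrak g$, $G=K\exp(\mathfrak p)$ with $K=G\cap\mathrm O(V)$, $\mathfrak p=\mathfrak g\cap\mathrm{Sym}(V)$. Let $\mathfrak a\subset\mathfrak p$ be an Abelian subalgebra and $A=\exp(\mathfrak a)$, acting linearly on $V$. *)

From mathcomp Require Import all_boot all_algebra all_classical all_reals all_analysis.
From mathcomp Require mpoly.
Import numFieldNormedType.Exports.
Set Implicit Arguments. Unset Strict Implicit. Unset Printing Implicit Defensive.
Local Open Scope classical_set_scope.
Local Open Scope ring_scope.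

Definition expmx (R : realType) (n : nat) (M : 'M[R]_n) : 'M[R]_n :=
  limn (fun N : nat => \sum_(j < N) (j`!%:R)^-1 *: M ^+ j).

(* The subspace a of End(V) = 'M_n spanned by the family B. *)
Definition span_family (R : realType) (n k : nat) (B : 'I_k -> 'M[R]_n)
  : set 'M[R]_n :=
  [set X | exists t : 'I_k -> R, X = \sum_(i < k) t i *: B i].

Definition expgroup (R : realType) (n k : nat) (B : 'I_k -> 'M[R]_n)
  : set 'M[R]_n := (@expmx R n) @` span_family B.

Definition orbit_of (R : realType) (n k : nat) (B : 'I_k -> 'M[R]_n)
  (x : 'cV[R]_n) : set 'cV[R]_n :=
  [set g *m x | g in expgroup B].

Definition unstable_set (R : realType) (n k : nat) (B : 'I_k -> 'M[R]_n)
  : set 'cV[R]_n :=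
  [set x | closure (orbit_of B x) 0].

Definition real_algebraic (R : realType) (n : nat) (S : set 'cV[R]_n) : Prop :=
  exists (m : nat) (P : 'I_m -> mpoly.mpoly n R),
    S = [set x | forall i : 'I_m, mpoly.meval (fun j => x j 0) (P i) = 0].

From mathcomp Require Import all_boot all_algebra all_classical all_reals all_analysis.
From mathcomp Require mpoly.
From mathcomp Require Import complex spectral mxred.
Import numFieldNormedType.Exports.
Import GRing.Theory Num.Theory.
Local Open Scope classical_set_scope.
Local Open Scope ring_scope.
Import (canonicals, coercions) mpoly.

(* Commuting symmetric matrices are simultaneously diagonalizable: in the
   coordinates [P x] every element of [A = exp a] acts diagonally.  If [x] is
   unstable and the support of [P y] is contained in that of [P x], then
   [y = T x] for some [T] diagonal in the same coordinates; [T] commutes with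
   [A], is continuous and fixes [0], so [y] is unstable as well.  Hence the
   unstable set is the union of the linear subspaces
   [{y | supp (P y) \subset S}], where [S] runs over the finitely many
   supports of [P x] with [x] unstable; a finite union of linear subspaces is
   closed and is cut out by products of linear forms. *)

Lemma symmetric_diagonalizable (R : rcfType) n (A : 'M[R]_n) :
  A^T = A -> diagonalizable A.
Proof.
case: n A => [|n] A Asym.
  by exists 1%:M; rewrite ?unitmx1 //; apply/is_diag_mxP => -[].
pose AC := map_mx (real_complex R) A.
have AC_herm : AC \is hermsymmx.
  apply: realsym_hermsym.
    apply/is_hermitianmxP; rewrite expr0 scale1r -map_trmx.
    by apply/matrixP => i j; rewrite !mxE -[in LHS]Asym mxE.
  by apply/mxOverP => i j; rewrite mxE; apply/complex_realP; eexists.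
have d_real := hermitian_spectral_diag_real AC_herm.
have /orthomx_spectralP AC_E := hermitian_normalmx AC_herm.
set P := spectralmx AC in AC_E; set d := spectral_diag AC in AC_E d_real.
(* The spectral theorem over [R[i]] gives real eigenvalues, so the minimal
   polynomial of [A] has simple real roots. *)
apply/diagonalizableP.
exists (undup [seq complex.Re (d 0 i) | i <- enum 'I_n.+1]).
  exact: undup_uniq.
rewrite -(dvdp_map (real_complex R)) -mxminpoly_map -/AC.
rewrite map_prod_XsubC AC_E -conjVmx ?spectral_unit //.
rewrite mxminpoly_uconj ?unitmx_inv ?spectral_unit // mxminpoly_diag.
rewrite -(big_map (real_complex R) xpredT (fun r => 'X - r%:P)).
rewrite -undup_map_inj; last exact: complexI.
suff -> : [seq x%:C%C | x <- [seq complex.Re (d 0 i) | i <- enum 'I_n.+1]]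
    = [seq d 0 i | i <- enum 'I_n.+1] by [].
by rewrite -map_comp; apply: eq_map => i /=; exact/RRe_real/(mxOverP d_real).
Qed.

Lemma cvg_mx_entrywise (K : topologicalType) m n T (F : set_system T)
    (FF : Filter F) (u : T -> 'M[K]_(m, n)) (L : 'M[K]_(m, n)) :
  (forall i j, (fun t => u t i j) @ F --> L i j) -> u @ F --> L.
Proof.
move=> uL A /= [V VL sVA]; apply: (filterS (fun t Vt => sVA (u t) Vt)).
by apply: filter_forall => i; apply: filter_forall => j; apply: uL.
Qed.

Lemma linear_mx_continuous (K : numFieldType) m n p q
    (f : {linear 'M[K]_(m, n) -> 'M[K]_(p, q)}) :
  continuous f.
Proof.
have -> : f = (fun Y => \sum_i \sum_j Y i j *: f (delta_mx i j)) :> (_ -> _).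
  apply/funext => Y; rewrite {1}[Y]matrix_sum_delta linear_sum.
  apply: eq_bigr => i _; rewrite linear_sum.
  by apply: eq_bigr => j _; rewrite linearZ.
move=> X; apply: (cvg_big add_continuous (nbhs_filter X)) => i _.
apply: (cvg_big add_continuous (nbhs_filter X)) => j _.
apply: cvgZr_tmp; exact: coord_continuous.
Qed.

Lemma continuous_closure_image (T U : topologicalType) (f : T -> U) (A : set T) :
  continuous f -> f @` closure A `<=` closure (f @` A).
Proof.
move=> f_cont _ [x Ax <-] C /f_cont /Ax [y [Ay Cy]].
by exists (f y); split => //; exists y.
Qed.

Section KernelUnion.
Context {R : realType} {I : finType} {p n : nat} (M : I -> 'M[R]_(p, n)).

Lemma real_algebraic_kernel_union :
  real_algebraic [set x : 'cV[R]_n | exists i, M i *m x = 0].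
Proof.
pose row_form i j : mpoly.mpoly n R :=
  \sum_l M i j l *: mpoly.mpolyX R (mpoly.mnm1 l).
have row_formE i j (x : 'cV[R]_n) :
    mpoly.meval (fun l => x l 0) (row_form i j) = (M i *m x) j 0.
  rewrite raddf_sum mxE; apply: eq_bigr => l _.
  by rewrite /= mpoly.mevalZ mpoly.mevalXU.
(* [x] lies in the union iff every product of one row form per kernel
   vanishes at [x]. *)
pose Q (f : {ffun I -> 'I_p}) := \prod_i row_form i (f i).
exists #|{ffun I -> 'I_p}|, (fun c => Q (enum_val c)).
apply/seteqP; split => x /=.
  move=> [i Mix] c; rewrite rmorph_prod (bigD1 i) //= row_formE Mix mxE.
  by rewrite mul0r.
move=> Qx; apply: contrapT => /forallNP Mx_neq0.
have /fin_all_exists[f Mfx] i : exists j, (M i *m x) j 0 != 0.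
  have /eqP/matrix0Pn[j [l]] := Mx_neq0 i.
  by rewrite (ord1 l); exists j.
have /eqP := Qx (enum_rank [ffun i => f i]); rewrite enum_rankK rmorph_prod.
by apply/negP/prodf_neq0 => i _; rewrite ffunE /= row_formE.
Qed.

Lemma closed_kernel_union : closed [set x : 'cV[R]_n | exists i, M i *m x = 0].
Proof.
have -> : [set x : 'cV[R]_n | exists i, M i *m x = 0] =
    \bigcup_(i in setT) (mulmx (M i) @^-1` [set 0]).
  by apply/seteqP; split => x; [case=> i Mix | case=> i _ Mix]; exists i.
apply: closed_bigcup => [|i _]; first exact: finite_finset.
apply: preimage_closed => [y _|]; first exact: linear_mx_continuous.
exact/accessible_closed_set1/hausdorff_accessible/norm_hausdorff.
Qed.

End KernelUnion.

Section DiagonalInBasis.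
Context {R : comUnitRingType} {n : nat} (P : 'M[R]_n).
Hypothesis P_unit : P \in unitmx.

Definition diag_in (d : 'rV[R]_n) : 'M[R]_n := invmx P *m diag_mx d *m P.

Lemma diag_inM d e :
  diag_in d *m diag_in e = diag_in (\row_a (d 0 a * e 0 a)).
Proof.
rewrite /diag_in !mulmxA -(mulmxA _ P) mulmxV // mulmx1.
by rewrite -(mulmxA _ (diag_mx d)) mulmx_diag.
Qed.

Lemma diag_inC d e : diag_in d *m diag_in e = diag_in e *m diag_in d.
Proof.
by rewrite !diag_inM; congr diag_in; apply/rowP => a; rewrite !mxE mulrC.
Qed.

Lemma diag_inX d j : diag_in d ^+ j = diag_in (\row_a d 0 a ^+ j).
Proof.
elim: j => [|j IHj].
  rewrite expr0 /diag_in (_ : \row_a _ = const_mx 1); last first.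
    by apply/rowP => a; rewrite !mxE.
  by rewrite diag_const_mx mulmx1 mulVmx.
rewrite exprS IHj -mulmxE diag_inM; congr diag_in.
by apply/rowP => a; rewrite !mxE exprS.
Qed.

Lemma diag_in_sumZ I (r : seq I) (c : I -> R) (F : I -> 'rV[R]_n) :
  \sum_(i <- r) c i *: diag_in (F i) = diag_in (\sum_(i <- r) c i *: F i).
Proof.
rewrite /diag_in linear_sum mulmx_sumr mulmx_suml; apply: eq_bigr => i _.
by rewrite scalemxAl scalemxAr -linearZ.
Qed.

Lemma mul_diag_in p d (x : 'M[R]_(n, p)) :
  P *m (diag_in d *m x) = diag_mx d *m (P *m x).
Proof. by rewrite /diag_in !mulmxA mulmxV // mul1mx. Qed.

End DiagonalInBasis.

Lemma expmx_diag_in (R : realType) n (P : 'M[R]_n) (d : 'rV[R]_n) :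
  P \in unitmx -> expmx (diag_in P d) = diag_in P (\row_a expR (d 0 a)).
Proof.
move=> P_unit.
have partial_sumsE N : \sum_(j < N) (j`!%:R)^-1 *: diag_in P d ^+ j
    = diag_in P (\row_a series (exp_coeff (d 0 a)) N).
  under eq_bigr do rewrite diag_inX //.
  rewrite diag_in_sumZ; congr diag_in; apply/rowP => a.
  rewrite summxE mxE /series /= big_mkord; apply: eq_bigr => j _.
  by rewrite !mxE /exp_coeff /= mulrC.
have diag_in_continuous : continuous (diag_in P).
  move=> e.
  apply: (@continuous_comp _ _ _ (mulmx (invmx P) \o diag_mx) (mulmxr P)).
    by apply: continuous_comp; exact: linear_mx_continuous.
  exact: linear_mx_continuous.
apply: cvg_lim; first exact: norm_hausdorff.
under eq_cvg do rewrite partial_sumsE.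
apply: continuous_cvg; first exact: diag_in_continuous.
apply: cvg_mx_entrywise => i a; rewrite !mxE; under eq_cvg do rewrite mxE.
exact: is_cvg_series_exp_coeff.
Qed.

Lemma expgroup_diag_in {R : realType} {n k} {B : 'I_k -> 'M[R]_n} :
    (forall i, (B i)^T = B i) -> (forall i j, B i *m B j = B j *m B i) ->
  exists2 P : 'M[R]_n, P \in unitmx &
    forall g, expgroup B g -> exists e, g = diag_in P e.
Proof.
move=> Bsym Bcomm.
have [P P_unit /allP PB] : codiagonalizable [seq B i | i <- enum 'I_k].
  apply/codiagonalizableP; split.
    by move=> _ _ /mapP[i _ ->] /mapP[j _ ->]; exact: Bcomm.
  by move=> _ /mapP[i _ ->]; exact: symmetric_diagonalizable.
have /fin_all_exists[d Bd] i : exists d, B i = diag_in P d.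
  have /(similar_diagLR P_unit)[D ->] := PB _ (map_f B (mem_enum _ i)).
  by exists D; rewrite conjVmx.
exists P => // _ [_ [t ->] <-].
rewrite (eq_bigr _ (fun i _ => congr1 _ (Bd i))) diag_in_sumZ expmx_diag_in //.
by eexists.
Qed.

Section UnstableSet.
Context {R : realType} {n k : nat} (B : 'I_k -> 'M[R]_n) (P : 'M[R]_n).
Hypothesis P_unit : P \in unitmx.
Hypothesis expgroup_diag : forall g, expgroup B g -> exists e, g = diag_in P e.

Definition coord_supp (x : 'cV[R]_n) : {set 'I_n} := [set j | (P *m x) j 0 != 0].

Definition coord_mask (S : {set 'I_n}) : 'M[R]_n :=
  diag_mx (\row_j (j \notin S)%:R) *m P.

Lemma coord_mask_eq0 S y : coord_mask S *m y = 0 <-> coord_supp y \subset S.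
Proof.
rewrite -mulmxA; split => [Sy|/fintype.subsetP Sy].
  apply/fintype.subsetP => j; rewrite inE; apply: contraR => jS.
  have /colP/(_ j) := Sy.
  by rewrite mul_diag_mx mxE [_ 0 j]mxE [RHS]mxE jS mul1r => ->.
apply/colP => j; rewrite mul_diag_mx mxE [_ 0 j]mxE [RHS]mxE.
have [/Sy ->|] := boolP (j \in coord_supp y); first by rewrite mul0r.
by rewrite inE negbK => /eqP ->; rewrite mulr0.
Qed.

Lemma unstable_set_coord_supp_mono x y : unstable_set B x ->
  coord_supp y \subset coord_supp x -> unstable_set B y.
Proof.
move=> x_unstable /fintype.subsetP yx.
pose T := diag_in P (\row_j ((P *m y) j 0 / (P *m x) j 0)).
have Tx : T *m x = y.
  rewrite -[LHS](mulKmx P_unit) -[y](mulKmx P_unit) mul_diag_in //.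
  congr (_ *m _); apply/colP => j; rewrite mul_diag_mx mxE [_ 0 j]mxE.
  have [Pxj0|Pxj_neq0] := eqVneq ((P *m x) j 0) 0; last by rewrite divfK.
  (* Where [(P x)_j = 0] the ratio is [_ / 0 = 0], and [(P y)_j = 0] too. *)
  rewrite Pxj0 mulr0; apply/esym/eqP; apply: contraT => Pyj_neq0.
  by have := yx j; rewrite !inE Pxj0 eqxx => /(_ Pyj_neq0).
have T_orbit : mulmx T @` orbit_of B x `<=` orbit_of B y.
  move=> _ [_ [g Ag <-] <-]; exists g => //.
  have [e ->] := expgroup_diag g Ag.
  by rewrite mulmxA diag_inC // -mulmxA Tx.
rewrite /unstable_set /= -(mulmx0 _ T).
apply: (closureS T_orbit); apply: continuous_closure_image => //.
exact: linear_mx_continuous.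
Qed.

Definition unstable_supps : {set {set 'I_n}} :=
  [set S | `[< exists2 x, unstable_set B x & coord_supp x = S >]].

Lemma unstable_set_kernel_union : unstable_set B =
  [set y | exists S : {S | S \in unstable_supps}, coord_mask (val S) *m y = 0].
Proof.
apply/seteqP; split => y /=.
  move=> y_unstable.
  have Sy : coord_supp y \in unstable_supps.
    by rewrite inE; apply/asboolP; exists y.
  by exists (exist _ (coord_supp y) Sy); apply/coord_mask_eq0.
move=> [[S /=]]; rewrite inE => /asboolP[x x_unstable <-] /coord_mask_eq0.
exact: unstable_set_coord_supp_mono.
Qed.

End UnstableSet.

Arguments unstable_set_kernel_union {R n k B P}.

Theorem mainTheorem5 (R : realType) (n k : nat) (B : 'I_k -> 'M[R]_n)
  (Bsym : forall i : 'I_k, (B i)^T = B i)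
  (Bcomm : forall i j : 'I_k, B i *m B j = B j *m B i) :
  real_algebraic (unstable_set B) /\ closed (unstable_set B).
Proof.
have [P P_unit expB] := expgroup_diag_in Bsym Bcomm.
rewrite (unstable_set_kernel_union P_unit expB).
split; [exact: real_algebraic_kernel_union | exact: closed_kernel_union].
Qed.
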